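(* If $G_1$ and $G_2$ are vertex-disjoint triangle graphs, then their disjoint union $G_1+G_2$ and their join $G_1*G_2$ are also triangle graphs.
   Context: A graph $G$ is triangle if for every maximal stable set $S$ of $G$ and every edge $uv$ of $G$ with $u,v\notin S$, there is $s\in S$ adjacent to both $u$ and $v$. The join $G_1*G_2$ is obtained from $G_1+G_2$ by adding all edges between $V(G_1)$ and $V(G_2)$. *)

From mathcomp Require Import all_boot.
Set Implicit Arguments. Unset Strict Implicit. Unset Printing Implicit Defensive.

Record sgraph (T : finType) := SGraph {
  adj : rel T;
  adj_sym : symmetric adj;
  adj_irr : irreflexive adj }.

Definition stable (T : finType) (G : sgraph T) (S : {set T}) : bool :=
  [forall x in S, forall y in S, ~~ adj G x y].

Definition maximal_stable (T : finType) (G : sgraph T) (S : {set T}) : bool :=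
  maxset (stable G) S.

Definition triangle_graph (T : finType) (G : sgraph T) : Prop :=
  forall S : {set T}, maximal_stable G S ->
  forall u v : T, adj G u v -> u \notin S -> v \notin S ->
  exists2 s, s \in S & adj G s u && adj G s v.

Definition union_adj (T1 T2 : finType) (G1 : sgraph T1) (G2 : sgraph T2)
  : rel (T1 + T2)%type :=
  fun x y => match x, y with
  | inl a, inl b => adj G1 a b
  | inr a, inr b => adj G2 a b
  | _, _ => false
  end.

Definition join_adj (T1 T2 : finType) (G1 : sgraph T1) (G2 : sgraph T2)
  : rel (T1 + T2)%type :=
  fun x y => match x, y with
  | inl a, inl b => adj G1 a b
  | inr a, inr b => adj G2 a b
  | _, _ => true
  end.

Lemma union_adj_sym T1 T2 (G1 : sgraph T1) (G2 : sgraph T2) :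
  symmetric (union_adj G1 G2).
Proof. by case=> a [] b //=; rewrite adj_sym. Qed.

Lemma union_adj_irr T1 T2 (G1 : sgraph T1) (G2 : sgraph T2) :
  irreflexive (union_adj G1 G2).
Proof. by case=> a /=; rewrite adj_irr. Qed.

Lemma join_adj_sym T1 T2 (G1 : sgraph T1) (G2 : sgraph T2) :
  symmetric (join_adj G1 G2).
Proof. by case=> a [] b //=; rewrite adj_sym. Qed.

Lemma join_adj_irr T1 T2 (G1 : sgraph T1) (G2 : sgraph T2) :
  irreflexive (join_adj G1 G2).
Proof. by case=> a /=; rewrite adj_irr. Qed.

Definition graph_union T1 T2 (G1 : sgraph T1) (G2 : sgraph T2) : sgraph (T1 + T2)%type :=
  SGraph (@union_adj_sym T1 T2 G1 G2) (@union_adj_irr T1 T2 G1 G2).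

Definition graph_join T1 T2 (G1 : sgraph T1) (G2 : sgraph T2) : sgraph (T1 + T2)%type :=
  SGraph (@join_adj_sym T1 T2 G1 G2) (@join_adj_irr T1 T2 G1 G2).

From mathcomp Require Import all_boot.
Set Implicit Arguments. Unset Strict Implicit. Unset Printing Implicit Defensive.

(* A stable set is maximal iff it dominates the graph. In G1 + G2 a maximal
   stable set meets each side in a maximal stable set of that side, so each
   edge, which lies inside one side, is handled there. In G1 * G2 a stable set
   lies inside one side, say V(G1), and meets it in a maximal stable set of G1:
   edges inside G1 are handled in G1, and every other edge has an endpoint
   outside V(G1), adjacent to all of S, and an endpoint with a neighbour in S. *)

Section MaximalStable.
Variables (T : finType) (G : sgraph T).

Lemma stableP (S : {set T}) :
  reflect {in S &, forall x y, ~~ adj G x y} (stable G S).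
Proof.
apply: (iffP forallP) => [stS x y xS yS | stS x].
  by move: (stS x); rewrite xS => /forallP/(_ y); rewrite yS.
by apply/implyP=> xS; apply/forallP=> y; apply/implyP=> yS; apply: stS.
Qed.

Lemma maximal_stableP (S : {set T}) :
  reflect (stable G S /\ forall x, x \notin S -> exists2 s, s \in S & adj G s x)
          (maximal_stable G S).
Proof.
apply: (iffP maxsetP) => -[stS maxS]; split=> //; [move=> x xS | move=> B stB sSB].
- apply/exists_inP; apply: contraT => noNb.
  have stSx : stable G (x |: S).
    apply/stableP=> a b /setU1P[-> | aS] /setU1P[-> | bS].
    + by rewrite adj_irr.
    + by apply: contra noNb => xb; apply/exists_inP; exists b; rewrite // adj_sym.
    + by apply: contra noNb => ax; apply/exists_inP; exists a.
    + exact: (stableP _ stS).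
  by move: xS; rewrite -(maxS _ stSx (subsetUr _ _)) setU11.
- apply/eqP; rewrite eqEsubset sSB andbT; apply/subsetP=> x xB.
  apply: contraT => /maxS[s sS sx].
  by have := stableP _ stB s x (subsetP sSB s sS) xB; rewrite sx.
Qed.

End MaximalStable.

Section InducedCopy.
Variables (T T' : finType) (G : sgraph T) (H : sgraph T') (f : T' -> T).
Hypothesis adj_f : forall a b, adj G (f a) (f b) = adj H a b.
Variable S : {set T}.
Hypothesis maxS : maximal_stable G S.

Section NeighbourClosed.
Hypothesis nbS_codom : forall a s, s \in S -> adj G s (f a) -> s \in codom f.

Lemma preimset_maximal_stable : maximal_stable H (f @^-1: S).
Proof.
have [stS domS] := maximal_stableP _ _ maxS.
apply/maximal_stableP; split.
  by apply/stableP=> a b; rewrite !inE -adj_f; apply: (stableP _ _ stS).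
move=> a; rewrite inE => /domS[s sS sa].
have /codomP[c def_s] := nbS_codom sS sa.
by exists c; rewrite ?inE -?def_s // -adj_f -def_s.
Qed.

Lemma triangle_edge_in_copy a b : triangle_graph H -> adj H a b ->
  f a \notin S -> f b \notin S ->
  exists2 s, s \in S & adj G s (f a) && adj G s (f b).
Proof.
move=> triH ab aS bS.
have [||c cS] := triH _ preimset_maximal_stable a b ab; rewrite ?inE //.
by rewrite -!adj_f; exists (f c); rewrite ?inE in cS.
Qed.

End NeighbourClosed.

Lemma triangle_at_dominating_copy :
  triangle_graph H -> S \subset codom f ->
  (forall a x, x \notin codom f -> adj G (f a) x) ->
  forall u v, adj G u v -> u \notin S -> v \notin S ->
  exists2 s, s \in S & adj G s u && adj G s v.
Proof.
move=> triH sSf complete.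
have inS_codom s : s \in S -> s \in codom f by move/(subsetP sSf).
have [_ domS] := maximal_stableP _ _ maxS.
have adj_out s x : s \in S -> x \notin codom f -> adj G s x.
  by move=> /inS_codom/codomP[c ->]; apply: complete.
move=> u v uv uS vS; case: (boolP (v \in codom f)) => [vf | vf]; last first.
  by have [s sS su] := domS u uS; exists s; rewrite // su adj_out.
case: (boolP (u \in codom f)) => [/codomP[a def_u] | uf]; last first.
  by have [s sS sv] := domS v vS; exists s; rewrite // sv adj_out.
have /codomP[b def_v] := vf; rewrite {}def_u {}def_v in uv uS vS *.
apply: triangle_edge_in_copy; rewrite -?adj_f // => c s sS _.
exact: inS_codom.
Qed.

End InducedCopy.

Section UnionJoin.
Variables (T1 T2 : finType) (G1 : sgraph T1) (G2 : sgraph T2).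

Lemma union_triangle : triangle_graph G1 -> triangle_graph G2 ->
  triangle_graph (graph_union G1 G2).
Proof.
move=> tri1 tri2 S maxS [a|a] [b|b] ab aS bS //.
- apply: (triangle_edge_in_copy (f := inl)) => //.
  by move=> c [d|d] //= _ _; apply: codom_f.
- apply: (triangle_edge_in_copy (f := inr)) => //.
  by move=> c [d|d] //= _ _; apply: codom_f.
Qed.

Lemma join_stable_one_side (S : {set T1 + T2}) : stable (graph_join G1 G2) S ->
  S \subset codom inl \/ S \subset codom inr.
Proof.
move=> stS; have [|/subsetPn[x xS xl]] := boolP (S \subset codom inl).
  by left.
right; apply/subsetP=> -[c|c] cS; last exact: codom_f.
case: x xS xl => [d|d] xS; first by rewrite codom_f.
by have := stableP _ _ stS _ _ xS cS.
Qed.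

Lemma join_triangle : triangle_graph G1 -> triangle_graph G2 ->
  triangle_graph (graph_join G1 G2).
Proof.
move=> tri1 tri2 S maxS.
case: (join_stable_one_side (maximal_stableP _ _ maxS).1) => sS.
- apply: (triangle_at_dominating_copy (f := inl)) => //.
  by move=> a [d|d] //; rewrite codom_f.
- apply: (triangle_at_dominating_copy (f := inr)) => //.
  by move=> a [d|d] //; rewrite codom_f.
Qed.

End UnionJoin.

Theorem proposition5 (T1 T2 : finType) (G1 : sgraph T1) (G2 : sgraph T2) :
  triangle_graph G1 -> triangle_graph G2 ->
  triangle_graph (graph_union G1 G2) /\ triangle_graph (graph_join G1 G2).
Proof. by move=> tri1 tri2; split; [apply: union_triangle | apply: join_triangle]. Qed.
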